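(* Let $n,m,k$ be positive integers with $k<m\le kn$. For every single-category instance with $n$ agents, $m$ goods and cardinality constraint $k$, $$\frac{\text{OPT-USW}(I)}{\max_{\mathcal{A}\in \mathcal{C}_k(I)}\text{USW}(\mathcal{A})}\le \frac{1}{2}\left(1+\sqrt{1+\frac{m-1}{k}}\right).$$ Moreover, if $m=k(c^2-1)+1$ for some integer $c\ge 2$, then there exists such an instance (with some number $n$ of agents satisfying $kn\ge m$) for which this ratio equals $\frac{1}{2}\left(1+\sqrt{1+\frac{m-1}{k}}\right)$. Consequently, the utilitarian price of cardinality in the single-category case is $\frac{1}{2}\left(1+\sqrt{1+\frac{m-1}{k}}\right)$ (as an upper bound valid for all instances, attained whenever $m=k(c^2-1)+1$).
   Context: A single-category instance consists of a set $N$ of $n$ agents and a set $M$ of $m$ indivisible goods; each agent $i$ has an additive utility function $u_i:2^M\to\mathbb{R}_{\ge 0}$ with $u_i(\emptyset)=0$ and $u_i(M)=1$ (normalized). An allocation $\mathcal{A}=(A_1,\dots,A_n)$ is a partition of $M$ into $n$ (possibly empty) bundles, agent $i$ receiving $A_i$. Given a positive integer $k$ (the cardinality constraint, with $k\ge m/n$), an allocation is cardinal if $|A_i|\le k$ for all $i$; $\mathcal{C}_k(I)$ denotes the set of cardinal allocations. $\text{USW}(\mathcal{A})=\sum_{i\in N}u_i(A_i)$, and $\text{OPT-USW}(I)$ is the maximum of $\text{USW}$ over all allocations. The utilitarian price of cardinality is the supremum of the ratio $\text{OPT-USW}(I)/\max_{\mathcal{A}\in\mathcal{C}_k(I)}\text{USW}(\mathcal{A})$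 over instances. *)

From mathcomp Require Import all_boot all_order all_algebra.
From mathcomp Require Import reals.
Set Implicit Arguments. Unset Strict Implicit. Unset Printing Implicit Defensive.
Import Order.TTheory GRing.Theory Num.Theory.
Local Open Scope ring_scope.

Section Defs.
Variable R : realType.

(* A single-category instance with n agents ('I_n) and m goods ('I_m):
   u i g is the value of good g for agent i; u_i(S) = \sum_(g in S) u i g
   (additive). *)
Definition instance_utils (n m : nat) := 'I_n -> 'I_m -> R.

Definition normalized (n m : nat) (u : instance_utils n m) : Prop :=
  (forall i g, 0 <= u i g) /\ (forall i, \sum_(g < m) u i g = 1).

(* An allocation (a partition of M into n possibly empty bundles) is encoded
   by the map sending each good to the agent receiving it; A_i = a^{-1}(i). *)
Definition allocation (n m : nat) := {ffun 'I_m -> 'I_n}.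

Definition bundle (n m : nat) (a : allocation n m) (i : 'I_n) : {set 'I_m} :=
  [set g | a g == i].

Definition util (n m : nat) (u : instance_utils n m) (i : 'I_n) (S : {set 'I_m}) : R :=
  \sum_(g in S) u i g.

Definition USW (n m : nat) (u : instance_utils n m) (a : allocation n m) : R :=
  \sum_(i < n) util u i (bundle a i).

Definition cardinal (n m k : nat) (a : allocation n m) : bool :=
  [forall i, #|bundle a i| <= k]%N.

(* OPT-USW(I): maximum of USW over all allocations (USW >= 0, so 0 is a
   harmless neutral element for max). *)
Definition OPT_USW (n m : nat) (u : instance_utils n m) : R :=
  \big[Num.max/0]_(a : allocation n m) USW u a.

Definition OPT_card_USW (n m k : nat) (u : instance_utils n m) : R :=
  \big[Num.max/0]_(a : allocation n m | cardinal k a) USW u a.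

Definition poc_bound (m k : nat) : R :=
  (1 + Num.sqrt (1 + (m%:R - 1) / k%:R)) / 2.

End Defs.

(* Let o give every good to an agent valuing it most, so that OPT-USW is the sum of
   the values x_i of the o-bundles A_i. An overfull agent (|A_i| > k) keeps a k-subset
   of A_i and its other goods are moved to the k - |A_j| free places of the agents j
   with |A_j| <= k; there are enough of them since m <= k n. Among the cyclic shifts
   of an injection of the moved goods into the free places, one collects at least
   the sum of d(g) over the moved goods g, where d(g) is the average value of g over
   the free places; and a best k-subset of A_i keeps a k/|A_i| share of x_i - d_i,
   where d_i is the sum of d over A_i and the d_i add up to 1. The AM-GM inequality
   e - B k e / s <= e s / (4 k B), summed over the overfull agents and combined with
   sum_i (x_i - d_i) |A_i| <= m - 1 = 4 k B (B - 1), gives OPT-USW <= B times the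
   value of this cardinal allocation.
   The bound is attained by t = c - 1 blocks of s = k (t + 2) goods, every good of
   block i being worth 1/s to agent i alone, plus one good worth 1 to all other
   agents: OPT-USW = t + 1, while a cardinal allocation gets only k/s of each block,
   i.e. 1 + t / (t + 2) in total. *)

From mathcomp Require Import all_boot all_order all_algebra.
From mathcomp Require Import reals.
From mathcomp Require Import ring lra zify.
Import Order.TTheory GRing.Theory Num.Theory.
Set Implicit Arguments. Unset Strict Implicit. Unset Printing Implicit Defensive.
Local Open Scope ring_scope.

Lemma big_bundle (T : Type) (idx : T) (op : Monoid.com_law idx) (n m : nat)
    (a : allocation n m) (F : 'I_n -> 'I_m -> T) :
  \big[op/idx]_(i < n) \big[op/idx]_(g in bundle a i) F i g
  = \big[op/idx]_(g < m) F (a g) g.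
Proof.
rewrite [RHS](partition_big a xpredT) //; apply: eq_bigr => i _.
by apply: eq_big => [g | g]; rewrite inE // => /eqP ->.
Qed.

Lemma sum_card_bundleI (n m : nat) (a : allocation n m) (X : {set 'I_m}) :
  (\sum_(i < n) #|bundle a i :&: X|)%N = #|X|.
Proof.
rewrite -sum1_card (partition_big a xpredT) //; apply: eq_bigr => i _.
by rewrite -sum1_card; apply: eq_bigl => g; rewrite !inE andbC.
Qed.

Lemma sum_card_bundle (n m : nat) (a : allocation n m) :
  (\sum_(i < n) #|bundle a i|)%N = m.
Proof.
rewrite -[RHS]card_ord -cardsT -(sum_card_bundleI a).
by apply: eq_bigr => i _; rewrite setIT.
Qed.

Lemma USW_sum (R : realType) (n m : nat) (u : instance_utils R n m) (a : allocation n m) :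
  USW u a = \sum_(g < m) u (a g) g.
Proof. exact: big_bundle. Qed.

Lemma cardinal_of_inj (n m k : nat) (a : allocation n m) (f : 'I_m -> 'I_k) :
  (forall g1 g2, a g1 = a g2 -> f g1 = f g2 -> g1 = g2) -> cardinal k a.
Proof.
move=> f_inj; apply/forallP => i; rewrite -[k in (_ <= k)%N]card_ord.
apply: (leq_card_in f) => g1 g2; rewrite !inE => /eqP a1 /eqP a2.
by apply: f_inj; rewrite a1 a2.
Qed.

Lemma card_ord_geq (k s : nat) : #|[set c : 'I_k | (s <= c)%N]| = (k - s)%N.
Proof.
rewrite -sum1_card -[RHS]muln1 -sum_nat_const_nat big_geq_mkord.
by apply: eq_bigl => c; rewrite inE.
Qed.

Section OptimalValues.
Variables (R : realType) (n m k : nat) (u : instance_utils R n m).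

Lemma USW_le_OPT_USW (a : allocation n m) : USW u a <= OPT_USW u.
Proof. exact: le_bigmax. Qed.

Lemma USW_le_OPT_card_USW (a : allocation n m) :
  cardinal k a -> USW u a <= OPT_card_USW k u.
Proof. exact: le_bigmax_cond. Qed.

Lemma OPT_card_USW_ge0 : 0 <= OPT_card_USW k u.
Proof. exact: bigmax_ge_id. Qed.

Lemma OPT_card_USW_le (x : R) :
  0 <= x -> (forall a, cardinal k a -> USW u a <= x) -> OPT_card_USW k u <= x.
Proof. exact: bigmax_le. Qed.

Lemma OPT_USW_max (o : allocation n m) :
  (forall i g, 0 <= u i g) -> (forall i g, u i g <= u (o g) g) -> OPT_USW u = USW u o.
Proof.
move=> u_ge0 o_max; apply/le_anti; rewrite USW_le_OPT_USW andbT.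
apply: bigmax_le => [|a _]; first by rewrite USW_sum sumr_ge0.
by rewrite !USW_sum; apply: ler_sum => g _.
Qed.

End OptimalValues.

Lemma big_ord_mul (T : Type) (idx : T) (op : Monoid.law idx) (a b : nat) (F : nat -> T) :
  \big[op/idx]_(g < a * b) F g = \big[op/idx]_(i < a) \big[op/idx]_(r < b) F (i * b + r)%N.
Proof.
rewrite -(big_mkord xpredT) big_nat_mul big_mkord; apply: eq_bigr => i _.
rewrite -[X in \big[_/_]_(X <= _ < _) _]add0n big_addn mulSn addnK big_mkord.
by apply: eq_bigr => r _; rewrite addnC.
Qed.

Lemma sum_ord_if_lt (V : nmodType) (n t : nat) (x : V) : (t <= n)%N ->
  \sum_(i < n) (if (i < t)%N then x else 0) = x *+ t.
Proof.
by move=> le_tn; rewrite -big_mkcond -(big_ord_widen _ (fun=> x)) // sumr_const card_ord.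
Qed.

Lemma exists_inj_sum_ge_avg (R : realFieldType) (I T : finType)
    (F : {set I}) (V : {set T}) (phi : I -> T -> R) :
  (0 < #|V|)%N -> (#|F| <= #|V|)%N ->
  exists sigma : I -> T, [/\ {in F &, injective sigma}, {in F, forall g, sigma g \in V}
    & (\sum_(g in F) \sum_(x in V) phi g x) / #|V|%:R <= \sum_(g in F) phi g (sigma g)].
Proof.
move=> V_gt0; have /card_gt0P[t0 _] := V_gt0.
move: V_gt0; case def_N: #|V| => [//|N] _ leFV.
have size_V : size (enum V) = N.+1 by rewrite -cardE.
pose j g : 'I_N.+1 := inord (index g (enum F)).
(* shift r sends the j-th element of F to the (j + r)-th element of V, cyclically;
   summed over all r, it meets every pair of F x V exactly once *)
pose shift (r : 'I_N.+1) g := nth t0 (enum V) (j g + r)%R.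
pose total r := \sum_(g in F) phi g (shift r g).
have sum_total : \sum_r total r = \sum_(g in F) \sum_(x in V) phi g x.
  rewrite exchange_big; apply: eq_bigr => g _.
  rewrite (reindex_inj (addrI (- j g))) /=.
  under eq_bigr => r _ do rewrite /shift addNKr.
  by rewrite -(big_enum _ _ V) (big_nth t0) size_V big_mkord.
have [r0 _ r0_max] := @arg_maxP _ _ _ ord0 xpredT total isT.
exists (shift r0); split.
- move=> g1 g2 Fg1 Fg2 /eqP; rewrite /shift nth_uniq ?size_V ?enum_uniq //.
  move=> /eqP/val_inj/addIr/(congr1 (@nat_of_ord _)).
  have idx_lt g : g \in F -> (index g (enum F) < N.+1)%N.
    by move=> Fg; rewrite (leq_trans _ leFV) // cardE index_mem mem_enum.
  rewrite /j !inordK ?idx_lt //.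
  by apply: (index_inj g1); rewrite mem_enum.
- by move=> g _; rewrite -mem_enum mem_nth ?size_V.
- rewrite -sum_total ler_pdivrMr ?ltr0n //.
  apply: le_trans (ler_sum _ (fun r _ => r0_max r isT)) _.
  by rewrite sumr_const card_ord mulr_natr /total.
Qed.

Lemma exists_subset_sum_ge_frac (R : realFieldType) (T : finType) (k : nat)
    (A : {set T}) (w : T -> R) :
  (k <= #|A|)%N ->
  exists K : {set T}, [/\ K \subset A, #|K| = k
    & k%:R / #|A|%:R * \sum_(x in A) w x <= \sum_(x in K) w x].
Proof.
move=> leKA; case: (posnP #|A|) => [A0 | A_gt0].
  move: leKA; rewrite A0 leqn0 => /eqP ->.
  by exists set0; rewrite sub0set cards0 big_set0 mulr0n !mul0r.
have card_setT_le : (#|[set: 'I_k]| <= #|A|)%N by rewrite cardsT card_ord.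
have [sigma [sigma_inj sigma_A]] := exists_inj_sum_ge_avg (fun _ => w) A_gt0 card_setT_le.
rewrite sumr_const cardsT card_ord => avg_le.
exists (sigma @: setT); split.
- by apply/subsetP => _ /imsetP[c _ ->]; rewrite sigma_A ?in_setT.
- by rewrite card_in_imset // cardsT card_ord.
- rewrite big_imset //; apply: le_trans avg_le.
  by rewrite mulrAC mulr_natl.
Qed.

Lemma cardinal_reassign (n m k : nat) (a : allocation n m) (F : {set 'I_m})
    (V : {set 'I_n * 'I_k}) (sigma : 'I_m -> 'I_n * 'I_k) :
  {in F &, injective sigma} -> {in F, forall g, sigma g \in V} ->
  (forall i, (#|bundle a i :\: F| <= k)%N) ->
  (forall x, x \in V -> (#|bundle a x.1 :\: F| <= x.2)%N) ->
  cardinal k [ffun g => if g \in F then (sigma g).1 else a g].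
Proof.
move=> sigma_inj sigma_V rest_le slot_ge; apply/forallP => i.
set S := bundle a i :\: F; set G := [set g in F | (sigma g).1 == i].
have -> : bundle [ffun g => if g \in F then (sigma g).1 else a g] i = S :|: G.
  by apply/setP => g; rewrite !inE ffunE; case: (g \in F); rewrite ?orbF.
have card_G : (#|G| <= k - #|S|)%N.
  rewrite -card_ord_geq -(@card_in_imset _ _ (fun g => (sigma g).2)).
    apply: subset_leq_card; apply/subsetP => _ /imsetP[g + ->].
    rewrite !inE => /andP[Fg /eqP sigma1]; rewrite /S -sigma1.
    exact: slot_ge (sigma_V g Fg).
  move=> g1 g2; rewrite !inE => /andP[F1 /eqP e1] /andP[F2 /eqP e2] e12.
  apply: sigma_inj => //.
  by rewrite [sigma g1]surjective_pairing [sigma g2]surjective_pairing e1 e2 e12.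
move: (rest_le i) card_G; rewrite -/S cardsU; lia.
Qed.

Lemma exists_cardinal_reassignment (R : realType) (n m k : nat)
    (u : instance_utils R n m) (a : allocation n m) (F : {set 'I_m})
    (V : {set 'I_n * 'I_k}) :
  (0 < #|V|)%N -> (#|F| <= #|V|)%N ->
  (forall i, (#|bundle a i :\: F| <= k)%N) ->
  (forall x, x \in V -> (#|bundle a x.1 :\: F| <= x.2)%N) ->
  exists2 b : allocation n m, cardinal k b &
    \sum_(g < m) (if g \in F then (\sum_(x in V) u x.1 g) / #|V|%:R else u (a g) g)
    <= USW u b.
Proof.
move=> V_gt0 leFV rest_le slot_ge.
have [sigma [sigma_inj sigma_V avg_le]] :=
  exists_inj_sum_ge_avg (fun g x => u x.1 g) V_gt0 leFV.
exists [ffun g => if g \in F then (sigma g).1 else a g].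
  exact: cardinal_reassign sigma_inj sigma_V rest_le slot_ge.
rewrite USW_sum [X in _ <= X](bigID (mem F)) [X in X <= _](bigID (mem F)) /=.
apply: lerD.
  apply: le_trans (_ : _ <= \sum_(g in F) u (sigma g).1 g) _.
    rewrite (eq_bigr (fun g => (\sum_(x in V) u x.1 g) / #|V|%:R)) => [|g ->] //.
    by rewrite -mulr_suml.
  by apply: ler_sum => g Fg; rewrite ffunE Fg.
by apply: ler_sum => g /negbTE Fg; rewrite ffunE Fg.
Qed.

Lemma excess_le_amgm (R : realFieldType) (kk B e s : R) :
  0 < kk -> 0 < B -> 0 <= e -> 0 < s ->
  e - B * (kk * e / s) <= e * s / (4 * kk * B).
Proof.
move=> kk_gt0 B_gt0 e_ge0 s_gt0; rewrite -subr_ge0.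
have -> : e * s / (4 * kk * B) - (e - B * (kk * e / s))
          = e * (s - 2 * B * kk) ^+ 2 / (4 * kk * B * s).
  by field; rewrite ?mulf_neq0 ?gt_eqF.
apply: divr_ge0; first by rewrite mulr_ge0 ?sqr_ge0.
by apply/ltW; rewrite !mulr_gt0.
Qed.

Lemma opt_bound_le_mul_card_bound (R : realFieldType) (I : finType) (P : pred I)
    (x d s : I -> R) (W B kk : R) :
  0 < kk -> 1 <= B ->
  (forall i, P i -> [/\ 0 <= d i, d i <= x i & 0 < s i]) ->
  1 <= W + \sum_(i | P i) d i ->
  \sum_(i | P i) (x i - d i) * s i <= 4 * kk * B * (B - 1) ->
  W + \sum_(i | P i) x i <= B * (W + \sum_(i | P i) (d i + kk * (x i - d i) / s i)).
Proof.
move=> kk_gt0 B_ge1 xds W_ge excess_le; have B_gt0 : 0 < B by apply: lt_le_trans B_ge1.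
have gap_le : \sum_(i | P i) ((x i - d i) - B * (kk * (x i - d i) / s i)) <= B - 1.
  apply: le_trans (_ : _ <= \sum_(i | P i) (x i - d i) * s i / (4 * kk * B)) _.
    apply: ler_sum => i /xds[d_ge0 d_le s_gt0].
    by apply: excess_le_amgm; rewrite ?subr_ge0.
  rewrite -mulr_suml ler_pdivrMr ?mulr_gt0 //.
  by apply: le_trans excess_le _; rewrite mulrC.
have x_split : \sum_(i | P i) x i = \sum_(i | P i) d i + \sum_(i | P i) (x i - d i).
  by rewrite -big_split; apply: eq_bigr => i _; rewrite [RHS]addrC subrK.
rewrite sumrB -mulr_sumr in gap_le.
rewrite big_split /= x_split; nra.
Qed.

Lemma poc_bound_ge1 (R : realType) (m k : nat) : (0 < m)%N -> 1 <= poc_bound R m k.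
Proof.
move=> m_gt0; have q_ge1 : 1 <= 1 + (m%:R - 1) / k%:R :> R.
  by rewrite lerDl divr_ge0 // subr_ge0 ler1n.
have : 1 <= Num.sqrt (1 + (m%:R - 1) / k%:R) :> R.
  by rewrite -[X in X <= _]sqrtr1 ler_sqrt // (le_trans ler01).
rewrite /poc_bound; lra.
Qed.

Lemma poc_bound_quadratic (R : realType) (m k : nat) : (0 < m)%N -> (0 < k)%N ->
  4 * k%:R * poc_bound R m k * (poc_bound R m k - 1) = m%:R - 1.
Proof.
move=> m_gt0 k_gt0; rewrite /poc_bound.
set q := 1 + (m%:R - 1) / k%:R.
have q_ge0 : 0 <= q by rewrite addr_ge0 ?divr_ge0 // subr_ge0 ler1n.
have k_neq0 : k%:R != 0 :> R by rewrite pnatr_eq0 -lt0n.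
transitivity (k%:R * (Num.sqrt q ^+ 2 - 1)); first by field.
by rewrite sqr_sqrtr // /q addrAC subrr add0r mulrC divfK.
Qed.

Section UpperBound.
Variables (R : realType) (n m k : nat) (u : instance_utils R n m) (o : allocation n m).
Hypotheses (u_ge0 : forall i g, 0 <= u i g) (u_sum1 : forall i, \sum_(g < m) u i g = 1).
Hypothesis o_max : forall i g, u i g <= u (o g) g.
Hypotheses (k_gt0 : (0 < k)%N) (m_gt0 : (0 < m)%N) (m_le_kn : (m <= k * n)%N).

Definition overfull i := (k < #|bundle o i|)%N.

(* (i, c) with #|bundle o i| <= c < k stands for the c-th place of a non-overfull agent i *)
Definition free_slots : {set 'I_n * 'I_k} :=
  [set x : 'I_n * 'I_k | ~~ overfull x.1 & (#|bundle o x.1| <= x.2)%N].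

Definition slot_avg g := (\sum_(x in free_slots) u x.1 g) / #|free_slots|%:R.

Definition slot_value i := \sum_(g in bundle o i) slot_avg g.

Definition overflow (kept : 'I_n -> {set 'I_m}) : {set 'I_m} :=
  [set g | overfull (o g) & g \notin kept (o g)].

Lemma u_le1 i g : u i g <= 1.
Proof.
rewrite -(u_sum1 i) (bigD1 g) //= lerDl.
by apply: sumr_ge0 => h _; apply: u_ge0.
Qed.

Lemma util_bundle_le1 i : util u i (bundle o i) <= 1.
Proof.
rewrite -(u_sum1 i) [X in _ <= X](bigID (mem (bundle o i))) /= lerDl.
by apply: sumr_ge0 => h _; apply: u_ge0.
Qed.

Lemma util_bundle_le_card i : util u i (bundle o i) <= #|bundle o i|%:R.
Proof. by rewrite -sum1_card natr_sum; apply: ler_sum => g _; apply: u_le1. Qed.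

Lemma slot_avg_ge0 g : 0 <= slot_avg g.
Proof. by rewrite divr_ge0 // sumr_ge0 // => x _; apply: u_ge0. Qed.

Lemma slot_avg_le g : slot_avg g <= u (o g) g.
Proof.
rewrite /slot_avg; case: (posnP #|free_slots|) => [-> | V_gt0].
  by rewrite invr0 mulr0 u_ge0.
rewrite ler_pdivrMr ?ltr0n // mulr_natr -sumr_const.
by apply: ler_sum => x _; apply: o_max.
Qed.

Lemma slot_value_ge0 i : 0 <= slot_value i.
Proof. by apply: sumr_ge0 => g _; apply: slot_avg_ge0. Qed.

Lemma slot_value_le i : slot_value i <= util u i (bundle o i).
Proof. by apply: ler_sum => g; rewrite inE => /eqP <-; apply: slot_avg_le. Qed.

Lemma sum_slot_value : (0 < #|free_slots|)%N -> \sum_i slot_value i = 1.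
Proof.
move=> V_gt0; rewrite /slot_value (big_bundle _ o (fun _ => slot_avg)).
rewrite -mulr_suml exchange_big /=.
under eq_bigr => x _ do rewrite u_sum1.
by rewrite sumr_const divff // pnatr_eq0 -lt0n.
Qed.

Lemma card_free_slots :
  #|free_slots| = (\sum_(i | ~~ overfull i) (k - #|bundle o i|))%N.
Proof.
rewrite -sum1_card big_mkcond /=.
rewrite (eq_bigr (fun p => if (p.1, p.2) \in free_slots then 1 else 0)%N) => [|[] //].
rewrite -(pair_big xpredT xpredT (fun i c => if (i, c) \in free_slots then 1 else 0)%N).
rewrite [RHS]big_mkcond; apply: eq_bigr => i _ /=; case: ifP => small_i.
  rewrite -card_ord_geq -sum1_card [RHS]big_mkcond.
  by apply: eq_bigr => c _; rewrite !inE /= small_i.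
by rewrite big1 // => c _; rewrite inE /= small_i.
Qed.

Section Overflow.
Variable kept : 'I_n -> {set 'I_m}.
Hypothesis kept_sub : forall i, overfull i -> kept i \subset bundle o i.

Lemma bundle_setD_overflow i :
  bundle o i :\: overflow kept = if overfull i then kept i else bundle o i.
Proof.
apply/setP => g; case: ifP => ovf; rewrite !inE; last first.
  by case: eqP => [-> | _]; rewrite ?ovf ?andbF.
case: eqP => [-> | og_i]; first by rewrite ovf negbK andbT.
by rewrite andbF; apply/esym/negP => /(subsetP (kept_sub ovf)); rewrite inE => /eqP.
Qed.

Lemma sum_reassigned :
  \sum_(g < m) (if g \in overflow kept then slot_avg g else u (o g) g)
  = \sum_(i | ~~ overfull i) util u i (bundle o i)
    + \sum_(i | overfull i) (slot_value i + \sum_(g in kept i) (u i g - slot_avg g)).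
Proof.
rewrite -(big_bundle _ o (fun i g => if g \in overflow kept then slot_avg g else u i g)).
rewrite (bigID overfull) addrC /=; congr (_ + _); apply: eq_bigr => i ovf; last first.
  by apply: eq_bigr => g; rewrite !inE => /eqP ->; rewrite (negbTE ovf).
transitivity (\sum_(g in bundle o i)
  (slot_avg g + (if g \in kept i then u i g - slot_avg g else 0))).
  apply: eq_bigr => g; rewrite inE => /eqP og_i; rewrite !inE og_i ovf /=.
  by case: (g \in kept i); rewrite /= ?addr0 // addrC subrK.
rewrite big_split /= -big_mkcondr; congr (_ + _).
by apply: eq_bigl => g; rewrite andb_idl // => /(subsetP (kept_sub ovf)).
Qed.

Lemma card_bundle_setD_overflow_le_slot x :
  x \in free_slots -> (#|bundle o x.1 :\: overflow kept| <= x.2)%N.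
Proof.
rewrite inE => /andP[small_x le_x].
by rewrite bundle_setD_overflow // (negbTE small_x).
Qed.

Hypothesis card_kept : forall i, overfull i -> #|kept i| = k.

Lemma card_overflow :
  #|overflow kept| = (\sum_(i | overfull i) (#|bundle o i| - k))%N.
Proof.
rewrite -(sum_card_bundleI o) [RHS]big_mkcond; apply: eq_bigr => i _ /=.
have := cardsID (overflow kept) (bundle o i).
rewrite bundle_setD_overflow; case: ifP => ovf; rewrite ?card_kept //.
  by move=> <-; rewrite addnK.
by move/eqP; rewrite -[X in _ == X]add0n eqn_add2r => /eqP.
Qed.

Lemma card_overflow_le : (#|overflow kept| <= #|free_slots|)%N.
Proof.
rewrite card_overflow card_free_slots.
have sum_s : (\sum_(i | overfull i) #|bundle o i| + \sum_(i | ~~ overfull i) #|bundle o i|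
              = m)%N by rewrite -[RHS](sum_card_bundle o) [RHS](bigID overfull).
have sum_k : (\sum_(i | overfull i) k + \sum_(i | ~~ overfull i) k = k * n)%N.
  have -> : (k * n = \sum_(i < n) k)%N by rewrite sum_nat_const card_ord mulnC.
  by rewrite [RHS](bigID overfull).
have big_part : (\sum_(i | overfull i) (#|bundle o i| - k) + \sum_(i | overfull i) k
                 = \sum_(i | overfull i) #|bundle o i|)%N.
  by rewrite -big_split; apply: eq_bigr => i /ltnW/subnK.
have small_part : (\sum_(i | ~~ overfull i) (k - #|bundle o i|)
                   + \sum_(i | ~~ overfull i) #|bundle o i| = \sum_(i | ~~ overfull i) k)%N.
  by rewrite -big_split; apply: eq_bigr => i; rewrite -leqNgt => /subnK.
move: m_le_kn; rewrite -[X in (X <= _)%N]sum_s -[X in (_ <= X)%N]sum_k.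
rewrite -big_part -small_part; lia.
Qed.

Lemma card_bundle_setD_overflow_le i : (#|bundle o i :\: overflow kept| <= k)%N.
Proof.
by rewrite bundle_setD_overflow; case: ifP => [/card_kept -> | /negbT]; rewrite // -leqNgt.
Qed.

End Overflow.

Lemma sum_excess_le : (0 < #|free_slots|)%N ->
  \sum_(i | overfull i) (util u i (bundle o i) - slot_value i) * #|bundle o i|%:R
  <= m%:R - 1.
Proof.
move=> V_gt0; apply: le_trans (_ : _ <= \sum_i (#|bundle o i|%:R - slot_value i)) _.
  rewrite [X in _ <= X](bigID overfull) /= -[X in X <= _]addr0 lerD //.
    apply: ler_sum => i ovf.
    have : 1 <= #|bundle o i|%:R :> R by rewrite ler1n (leq_ltn_trans (leq0n k) ovf).
    have := util_bundle_le1 i; have := slot_value_ge0 i; nra.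
  apply: sumr_ge0 => i _; rewrite subr_ge0.
  exact: le_trans (slot_value_le i) (util_bundle_le_card i).
by rewrite sumrB sum_slot_value // -natr_sum sum_card_bundle.
Qed.

Lemma exists_kept : exists kept : 'I_n -> {set 'I_m},
  [/\ forall i, overfull i -> kept i \subset bundle o i,
       forall i, overfull i -> #|kept i| = k
     & forall i, overfull i ->
         k%:R / #|bundle o i|%:R * \sum_(g in bundle o i) (u i g - slot_avg g)
         <= \sum_(g in kept i) (u i g - slot_avg g)].
Proof.
have /fin_all_exists[kept kept_spec] : forall i, exists K : {set 'I_m}, overfull i ->
    [/\ K \subset bundle o i, #|K| = k
      & k%:R / #|bundle o i|%:R * \sum_(g in bundle o i) (u i g - slot_avg g)
        <= \sum_(g in K) (u i g - slot_avg g)].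
  move=> i; case: (boolP (overfull i)) => [ovf | _]; last by exists set0.
  have [K K_spec] := exists_subset_sum_ge_frac (fun g => u i g - slot_avg g) (ltnW ovf).
  by exists K.
by exists kept; split=> i /kept_spec[].
Qed.

Lemma free_slots_gt0 i : overfull i -> (0 < #|free_slots|)%N.
Proof.
move=> ovf; have [kept [kept_sub card_kept _]] := exists_kept.
apply: leq_trans (card_overflow_le kept_sub card_kept).
by rewrite card_overflow // (bigD1 i) //= addn_gt0 subn_gt0; apply/orP; left.
Qed.

Definition cardinal_estimate :=
  \sum_(i | ~~ overfull i) util u i (bundle o i)
  + \sum_(i | overfull i)
      (slot_value i + k%:R * (util u i (bundle o i) - slot_value i) / #|bundle o i|%:R).

Lemma exists_cardinal_ge_estimate : (0 < #|free_slots|)%N ->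
  exists2 b : allocation n m, cardinal k b & cardinal_estimate <= USW u b.
Proof.
move=> V_gt0; have [kept [kept_sub card_kept kept_heavy]] := exists_kept.
have [b b_card b_val] := exists_cardinal_reassignment u V_gt0
  (card_overflow_le kept_sub card_kept) (card_bundle_setD_overflow_le kept_sub card_kept)
  (card_bundle_setD_overflow_le_slot kept_sub).
exists b => //; apply: le_trans b_val.
rewrite sum_reassigned // lerD2l; apply: ler_sum => i ovf; rewrite lerD2l.
apply: le_trans (kept_heavy i ovf).
by rewrite /util /slot_value -sumrB mulrAC.
Qed.

Lemma USW_le_poc_mul_estimate : (0 < #|free_slots|)%N ->
  USW u o <= poc_bound R m k * cardinal_estimate.
Proof.
move=> V_gt0; rewrite /USW [X in X <= _](bigID overfull) /= addrC.
apply: (opt_bound_le_mul_card_bound (x := fun i => util u i (bundle o i))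
                                    (s := fun i => #|bundle o i|%:R)).
- by rewrite ltr0n.
- exact: poc_bound_ge1.
- move=> i ovf; split; [exact: slot_value_ge0 | exact: slot_value_le |].
  by rewrite ltr0n (leq_ltn_trans (leq0n k) ovf).
- rewrite -(sum_slot_value V_gt0) (bigID overfull) /= addrC lerD2r.
  by apply: ler_sum => i _; apply: slot_value_le.
- by rewrite poc_bound_quadratic // sum_excess_le.
Qed.

Lemma OPT_USW_le_poc_mul : OPT_USW u <= poc_bound R m k * OPT_card_USW k u.
Proof.
have B_ge0 : 0 <= poc_bound R m k by apply: le_trans ler01 (poc_bound_ge1 _ _ m_gt0).
rewrite (OPT_USW_max u_ge0 o_max).
have [/existsP[i ovf] | /existsPn small] := boolP [exists i, overfull i]; last first.
  have o_card : cardinal k o by apply/forallP => i; rewrite leqNgt small.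
  apply: le_trans (USW_le_OPT_card_USW u o_card) _.
  by rewrite ler_peMl ?OPT_card_USW_ge0 ?poc_bound_ge1.
have V_gt0 := free_slots_gt0 ovf.
have [b b_card b_val] := exists_cardinal_ge_estimate V_gt0.
apply: le_trans (USW_le_poc_mul_estimate V_gt0) (ler_wpM2l B_ge0 _).
exact: le_trans b_val (USW_le_OPT_card_USW u b_card).
Qed.

End UpperBound.

Lemma OPT_ratio_le_poc_bound (R : realType) (n m k : nat) (u : instance_utils R n m) :
  (0 < n)%N -> (0 < m)%N -> (0 < k)%N -> (m <= k * n)%N -> normalized u ->
  OPT_USW u / OPT_card_USW k u <= poc_bound R m k.
Proof.
move=> n_gt0 m_gt0 k_gt0 m_le_kn [u_ge0 u_sum1].
pose o : allocation n m := [ffun g => [arg max_(i > Ordinal n_gt0) u i g]%O].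
have o_max i g : u i g <= u (o g) g by rewrite ffunE; case: arg_maxP => // j _; apply.
have le_mul := OPT_USW_le_poc_mul u_ge0 u_sum1 o_max k_gt0 m_gt0 m_le_kn.
have [-> | card_neq0] := eqVneq (OPT_card_USW k u) 0.
  by rewrite invr0 mulr0 (le_trans ler01) ?poc_bound_ge1.
by rewrite ler_pdivrMr ?lt0r ?card_neq0 ?OPT_card_USW_ge0 // mulrC.
Qed.

Section LowerBound.
Variables (R : realType) (k t : nat).
Hypothesis k_gt0 : (0 < k)%N.

Local Notation s := (k * t.+2)%N.
Local Notation m := (t * s).+1.
Local Notation n := (t * s + t).+1.

(* Good g lies in block g %/ s: blocks 0 .. t-1 have s goods each, block t is the
   single good t * s. *)
Definition block_utils : instance_utils R n m := fun i g =>
  if (i < t)%N then (if (g %/ s)%N == i then s%:R^-1 else 0)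
  else (if (g %/ s)%N == t then 1 else 0).

Lemma block_size_gt0 : (0 < s)%N.
Proof. by rewrite muln_gt0 k_gt0. Qed.

Lemma sum_block_if (j : nat) (c : R) :
  \sum_(g < m) (if (g %/ s)%N == j then c else 0)
  = if (j < t)%N then c *+ s else if j == t then c else 0.
Proof.
rewrite big_ord_recr /= mulnK ?block_size_gt0 //.
rewrite (big_ord_mul _ _ _ (fun g => if (g %/ s)%N == j then c else 0)).
under eq_bigr => i _ do under eq_bigr => r _ do
  rewrite divnMDl ?block_size_gt0 // divn_small // addn0.
under eq_bigr => i _ do rewrite sumr_const card_ord.
rewrite sumrMnl -big_mkcond big_ord1_eq.
by case: ltngtP; rewrite ?mul0rn ?addr0 ?add0r.
Qed.

Lemma inv_block_size_ge0 : 0 <= s%:R^-1 :> R.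
Proof. by rewrite invr_ge0 ler0n. Qed.

Lemma inv_block_size_le1 : s%:R^-1 <= 1 :> R.
Proof. by rewrite invf_le1 ?ltr0n ?block_size_gt0 // ler1n block_size_gt0. Qed.

Lemma inv_block_sizeMn : s%:R^-1 *+ s = 1 :> R.
Proof. by rewrite -(mulr_natr s%:R^-1 s) mulVf // pnatr_eq0 -lt0n block_size_gt0. Qed.

Lemma block_utils_normalized : normalized block_utils.
Proof.
split=> [i g | i]; rewrite /block_utils.
  by case: ifP => _; case: ifP => _; rewrite ?inv_block_size_ge0 ?ler01.
by case: (ltnP i t) => it; rewrite sum_block_if ?it ?ltnn ?eqxx ?inv_block_sizeMn.
Qed.

Lemma divn_block_le (g : 'I_m) : (g %/ s <= t)%N.
Proof.
rewrite -ltnS ltn_divLR ?block_size_gt0 // (leq_trans (ltn_ord g)) //.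
by rewrite mulSnr -addn1 leq_add2l block_size_gt0.
Qed.

Definition block_alloc : allocation n m := [ffun g : 'I_m => inord (g %/ s)].

Lemma block_utils_owner (i : 'I_n) (g : 'I_m) : i = (g %/ s)%N :> nat ->
  block_utils i g = if (g %/ s < t)%N then s%:R^-1 else 1.
Proof.
rewrite /block_utils => ->; rewrite eqxx; case: ltnP => // le_tg.
by rewrite eqn_leq divn_block_le le_tg.
Qed.

Lemma block_alloc_value g :
  block_utils (block_alloc g) g = if (g %/ s < t)%N then s%:R^-1 else 1.
Proof.
apply: block_utils_owner; rewrite ffunE inordK // ltnS.
exact: leq_trans (divn_block_le g) (leq_addl _ _).
Qed.

Lemma block_alloc_max i g : block_utils i g <= block_utils (block_alloc g) g.
Proof.
have := inv_block_size_ge0; have := inv_block_size_le1.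
rewrite block_alloc_value /block_utils.
by case: ifP => it; case: eqP => [-> | _]; rewrite ?it ?ltnn //; case: ifP.
Qed.

Lemma OPT_USW_block : OPT_USW block_utils = t.+1%:R.
Proof.
have [u_ge0 _] := block_utils_normalized.
rewrite (OPT_USW_max u_ge0 block_alloc_max) USW_sum.
under eq_bigr do rewrite block_alloc_value.
rewrite big_ord_recr /= mulnK ?block_size_gt0 // ltnn.
under eq_bigr => g _ do rewrite ltn_divLR ?block_size_gt0 // ltn_ord.
by rewrite sumr_const card_ord [(t * _)%N]mulnC mulrnA inv_block_sizeMn natr1.
Qed.

Lemma USW_block_cardinal_le (a : allocation n m) :
  cardinal k a -> USW block_utils a <= 1 + s%:R^-1 *+ k *+ t.
Proof.
move=> a_card; have sinv_ge0 := inv_block_size_ge0.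
apply: le_trans (_ : _ <= \sum_(g < m) ((if (g %/ s)%N == t then 1 else 0)
                       + (if (a g < t)%N then s%:R^-1 else 0))) _.
  rewrite USW_sum; apply: ler_sum => g _; rewrite /block_utils.
  move: sinv_ge0; set x := s%:R^-1 => x_ge0.
  by case: ltnP => _; case: eqP => _; try case: ifP => _; lra.
rewrite big_split /= sum_block_if ltnn eqxx lerD2l.
rewrite -(big_bundle _ a (fun i _ => if (i < t)%N then s%:R^-1 else 0)).
rewrite -(@sum_ord_if_lt _ n t (s%:R^-1 *+ k)); last exact: leqW (leq_addl _ _).
apply: ler_sum => i _; case: ifP => _; last by rewrite big1.
by rewrite sumr_const ler_wpMn2l // (forallP a_card i).
Qed.

Definition block_card_alloc : allocation n m :=
  [ffun g : 'I_m => inord (if g %% s < k then g %/ s else t + g)%N].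

Lemma block_card_agent_lt (g : 'I_m) : ((if g %% s < k then g %/ s else t + g) < n)%N.
Proof.
rewrite ltnS; case: ifP => _; first exact: leq_trans (divn_block_le g) (leq_addl _ _).
by rewrite addnC leq_add2r -ltnS.
Qed.

Lemma block_card_alloc_cardinal : cardinal k block_card_alloc.
Proof.
apply: (cardinal_of_inj (f := fun g : 'I_m => Ordinal (ltn_pmod (g %% s) k_gt0))) => g1 g2.
rewrite !ffunE => /(congr1 (@nat_of_ord _)); rewrite !inordK ?block_card_agent_lt //.
move=> + /(congr1 (@nat_of_ord _)) /=.
have := divn_block_le g1; have := divn_block_le g2.
have := leq_mod g1 s; have := leq_mod g2 s.
case: ifP => r1; case: ifP => r2.
- rewrite (modn_small r1) (modn_small r2) => _ _ _ _ q12 r12; apply: val_inj.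
  by rewrite /= (divn_eq g1 s) (divn_eq g2 s) q12 r12.
- move: r2 => /negbT; rewrite -leqNgt; lia.
- move: r1 => /negbT; rewrite -leqNgt; lia.
- by move=> _ _ _ _ /addnI g12 _; apply: val_inj.
Qed.

Lemma block_card_alloc_value g : block_utils (block_card_alloc g) g =
  if (g %% s < k)%N then (if (g %/ s < t)%N then s%:R^-1 else 1) else 0.
Proof.
case: ifP => r.
  by apply: block_utils_owner; rewrite ffunE inordK ?block_card_agent_lt ?r.
have lt_gt : (g %/ s < t)%N.
  rewrite ltn_divLR ?block_size_gt0 // ltn_neqAle -ltnS ltn_ord andbT.
  by apply: contraFneq r => ->; rewrite modnMl.
rewrite /block_utils ffunE inordK ?block_card_agent_lt // r.
by rewrite ltnNge leq_addr /= (ltn_eqF lt_gt).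
Qed.

Lemma USW_block_card_alloc : USW block_utils block_card_alloc = 1 + s%:R^-1 *+ k *+ t.
Proof.
rewrite USW_sum; under eq_bigr do rewrite block_card_alloc_value.
rewrite big_ord_recr /= modnMl k_gt0 mulnK ?block_size_gt0 // ltnn addrC; congr (_ + _).
rewrite (big_ord_mul _ _ _ (fun g => if (g %% s < k)%N then
                                       (if (g %/ s < t)%N then s%:R^-1 else 1) else 0)).
under eq_bigr => i _ do under eq_bigr => r _ do
  rewrite modnMDl modn_small // divnMDl ?block_size_gt0 // divn_small // addn0 ltn_ord.
under eq_bigr => i _ do rewrite sum_ord_if_lt ?leq_pmulr //.
by rewrite sumr_const card_ord.
Qed.

Lemma OPT_card_USW_block : OPT_card_USW k block_utils = 1 + s%:R^-1 *+ k *+ t.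
Proof.
apply/le_anti; rewrite -USW_block_card_alloc USW_le_OPT_card_USW ?block_card_alloc_cardinal //.
rewrite andbT USW_block_card_alloc.
apply: OPT_card_USW_le => [|a]; last exact: USW_block_cardinal_le.
by rewrite addr_ge0 ?mulrn_wge0 ?inv_block_size_ge0.
Qed.

Lemma block_share_eq : s%:R^-1 *+ k *+ t = t%:R / t.+2%:R :> R.
Proof.
have k_neq0 : k%:R != 0 :> R by rewrite pnatr_eq0 -lt0n.
rewrite -mulrnA -(mulr_natr s%:R^-1 (k * t)) !natrM.
by field; rewrite k_neq0 andbT -natrD pnatr_eq0.
Qed.

Lemma block_ratio : OPT_USW block_utils / OPT_card_USW k block_utils = poc_bound R m k.
Proof.
have k_neq0 : k%:R != 0 :> R by rewrite pnatr_eq0 -lt0n.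
rewrite OPT_USW_block OPT_card_USW_block block_share_eq /poc_bound.
have -> : 1 + (m%:R - 1) / k%:R = t.+1%:R ^+ 2 :> R.
  by rewrite -natr1 addrK !natrM; field.
rewrite sqrtr_sqr ger0_norm ?ler0n // -!natr1.
have : 0 <= t%:R :> R := ler0n _ t.
move: (t%:R) => x x_ge0.
by field; rewrite !lt0r_neq0 //; lra.
Qed.

End LowerBound.

Lemma poc_bound_attained (R : realType) (k t : nat) : (0 < k)%N ->
  exists n : nat, (0 < n)%N /\ ((t * (k * t.+2)).+1 <= k * n)%N /\
    exists u : instance_utils R n (t * (k * t.+2)).+1,
      normalized u /\ OPT_USW u / OPT_card_USW k u = poc_bound R (t * (k * t.+2)).+1 k.
Proof.
move=> k_gt0; exists (t * (k * t.+2) + t).+1; split=> //; split.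
  by apply: leq_trans (leq_pmull _ k_gt0); rewrite ltnS leq_addr.
by exists (@block_utils R k t); split; [exact: block_utils_normalized | exact: block_ratio].
Qed.

Theorem theorem1 (R : realType) :
  (forall (n m k : nat), (0 < n)%N -> (0 < m)%N -> (0 < k)%N ->
     (k < m)%N -> (m <= k * n)%N ->
     forall u : instance_utils R n m, normalized u ->
       OPT_USW u / OPT_card_USW k u <= poc_bound R m k)
  /\
  (forall (m k c : nat), (0 < k)%N -> (2 <= c)%N -> m = (k * (c ^ 2 - 1) + 1)%N ->
     exists n : nat, (0 < n)%N /\ (m <= k * n)%N /\
       exists u : instance_utils R n m, normalized u /\
         OPT_USW u / OPT_card_USW k u = poc_bound R m k).
Proof.
split=> [n m k n_gt0 m_gt0 k_gt0 _ m_le_kn u | m k c k_gt0 c_ge2 ->].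
  exact: OPT_ratio_le_poc_bound.
have [t ->] : exists t, c = t.+1 by exists c.-1; rewrite prednK // (leq_trans _ c_ge2).
have -> : (k * (t.+1 ^ 2 - 1) + 1 = (t * (k * t.+2)).+1)%N by rewrite -mulnn; nia.
exact: poc_bound_attained.
Qed.
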